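(* Let $n\ge 1$, $N=\{1,\dots,n\}$, and let $\mathcal{T}\in\mathbb{R}^{2\times\cdots\times 2}$ (order $n$) be a coefficient tensor realized by a tensor network with maximum bond dimension $\chi$, defining the multilinear map $g(\tilde x_1,\dots,\tilde x_n)=\mathcal{T}\times_1\tilde x_1\times_2\cdots\times_n\tilde x_n$ for $\tilde x_j\in\mathbb{R}^2$. Fix $x\in\mathbb{R}^n$, set $\tilde x_j=[x_j,1]^\top$, and for $C\subseteq N$ define the coalition value $v_g(x,C)=g(\tilde y_1,\dots,\tilde y_n)$ where $\tilde y_j=[x_j,1]^\top$ if $j\in C$ and $\tilde y_j=[0,1]^\top$ if $j\notin C$. Let $w(\cdot,n):\{0,\dots,n-1\}\to\mathbb{R}$ be any weights and, for $i\in N$, let \[ \Phi_i=\sum_{C\subseteq N\setminus\{i\}} w(|C|,n)\,\bigl[v_g(x,C\cup\{i\})-v_g(x,C)\bigr]. \] Then $\Phi_i$ can be computed exactly in $O(n\cdot\mathrm{poly}(\chi)+n^2)$ time.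
   Context: $\times_j$ denotes the mode-$j$ tensor–vector product (contracting the $j$-th index of the tensor with the vector). A tensor network represents $\mathcal{T}$ as a collection of small tensors (cores) connected by contracted internal edges (e.g. a tensor train or a balanced binary tree), with one uncontracted physical leg of dimension $2$ per feature; the maximum bond dimension (maximal cut rank) $\chi$ is the largest product of internal bond dimensions across any cut of the network. Following the paper's cost convention, one forward evaluation of $g$ (contraction of the network with $n$ input vectors) costs $O(\mathrm{poly}(\chi))$ time. *)

From HB Require Import structures.
From mathcomp Require Import all_boot all_order all_algebra.
Set Implicit Arguments. Unset Strict Implicit. Unset Printing Implicit Defensive.
Import Order.TTheory GRing.Theory Num.Theory.
Local Open Scope ring_scope.

(* Index 0 of each physical leg corresponds to the first component of
   \tilde x_j = [x_j, 1]^T, index 1 to the second component. *)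

Definition tensor (R : Type) (n : nat) := {ffun 'I_n -> 'I_2} -> R.

Definition gmap (R : nzRingType) (n : nat) (T : tensor R n)
  (v : 'I_n -> 'I_2 -> R) : R :=
  \sum_(s : {ffun 'I_n -> 'I_2}) T s * \prod_(j < n) v j (s j).

Definition tvec (R : nzRingType) (a : R) : 'I_2 -> R :=
  fun k => if k == ord0 then a else 1.

Definition coal (R : nzRingType) (n : nat) (T : tensor R n) (x : 'I_n -> R)
  (C : {set 'I_n}) : R :=
  gmap T (fun j => if j \in C then tvec (x j) else tvec 0).

Definition Phi (R : nzRingType) (n : nat) (T : tensor R n) (x : 'I_n -> R)
  (w : nat -> R) (i : 'I_n) : R :=
  \sum_(C : {set 'I_n} | i \notin C) w #|C| * (coal T x (i |: C) - coal T x C).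

(* Initial memory: x_1, ..., x_n, w(0,n), ..., w(n-1,n).
   - arithmetic instructions (constant, +, -, *, /) cost O(1) each;
   - a query instruction evaluates g (i.e. contracts the tensor network)
     on n input vectors read from registers, costing poly(chi) each
     (the paper's convention). *)
Inductive instr (n : nat) : Type :=
  | IConst of nat
  | IAdd of nat & nat
  | ISub of nat & nat
  | IMul of nat & nat
  | IDiv of nat & nat
  | IQuery of ('I_n -> 'I_2 -> nat).

Definition exec_instr (R : fieldType) (n : nat) (T : tensor R n)
  (mem : seq R) (ins : instr n) : R :=
  let r a := nth 0 mem a in
  match ins with
  | IConst k => k%:R
  | IAdd a b => r a + r b
  | ISub a b => r a - r b
  | IMul a b => r a * r b
  | IDiv a b => r a / r b
  | IQuery q => gmap T (fun j k => r (q j k))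
  end.

Fixpoint exec_prog (R : fieldType) (n : nat) (T : tensor R n)
  (mem : seq R) (P : seq (instr n)) : seq R :=
  match P with
  | [::] => mem
  | ins :: P' => exec_prog T (rcons mem (exec_instr T mem ins)) P'
  end.

Definition init_mem (R : Type) (n : nat) (x : 'I_n -> R) (w : nat -> R)
  : seq R := [seq x j | j <- enum 'I_n] ++ [seq w k | k <- iota 0 n].

Definition run (R : fieldType) (n : nat) (T : tensor R n) (x : 'I_n -> R)
  (w : nat -> R) (P : seq (instr n)) : R :=
  last 0 (exec_prog T (init_mem x w) P).

Definition is_query (n : nat) (ins : instr n) : bool :=
  if ins is IQuery _ then true else false.

Definition n_queries (n : nat) (P : seq (instr n)) : nat := count (@is_query n) P.
Definition n_arith (n : nat) (P : seq (instr n)) : nat :=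
  count (fun ins => ~~ is_query ins) P.

From mathcomp Require Import all_boot all_order all_algebra.
From mathcomp Require Import ring zify.
Import GRing.Theory Num.Theory.
Set Implicit Arguments. Unset Strict Implicit. Unset Printing Implicit Defensive.
Local Open Scope ring_scope.

(* Evaluate the network on [x_i, 0] for player i and on [x_l, 1 + u] for every
   other player l.  Since [x_l, 1 + u] = [x_l, 1] + u [0, 1] and
   [x_i, 0] = [x_i, 1] - [0, 1], multilinearity expands the result over
   coalitions: it is Q(u) = sum_{C not containing i} (v(C + i) - v(C)) u^(n-1-|C|),
   so Phi_i = sum_m w(n-1-m) [u^m]Q is a fixed linear functional of the
   coefficients of Q, a polynomial of degree < n.  Evaluating Q at u = 0, ..., n-1
   costs n network queries; the divided differences of these values give the
   Newton form of Q, and the functional is pushed through the Newton form one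
   node at a time, each stage costing O(n) arithmetic operations. *)

(** * Marginal contributions as a polynomial *)

Lemma gmap_ext (R : nzRingType) n (T : tensor R n) (v v' : 'I_n -> 'I_2 -> R) :
  (forall l k, v l k = v' l k) -> gmap T v = gmap T v'.
Proof. by move=> vv'; apply: eq_bigr => s _; congr (_ * _); apply: eq_bigr. Qed.

Lemma gmap_expand (R : comNzRingType) n (T : tensor R n) (a b : 'I_n -> R)
    (A B : 'I_n -> 'I_2 -> R) :
  gmap T (fun l k => a l * A l k + b l * B l k) =
  \sum_(J : {set 'I_n}) (\prod_(l in J) a l * \prod_(l in ~: J) b l) *
    gmap T (fun l => if l \in J then A l else B l).
Proof.
rewrite /gmap; under eq_bigr do rewrite bigA_distr mulr_sumr.
rewrite exchange_big /=; apply: eq_bigr => J _; rewrite mulr_sumr.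
apply: eq_bigr => s _; rewrite mulrCA; congr (_ * _).
rewrite [X in _ = _ * X](bigID (mem J)) /= mulrACA.
under [\prod_(l in ~: J) _]eq_bigl do rewrite in_setC.
rewrite -!big_split [LHS](bigID (mem J)) /=.
by congr (_ * _); apply: eq_bigr => l; [move=> -> | move=> /negbTE ->].
Qed.

Lemma big_setU1_pairs (T : finType) (V : nmodType) (i : T) (F : {set T} -> V) :
  \sum_(J : {set T}) F J = \sum_(C : {set T} | i \notin C) (F (i |: C) + F C).
Proof.
rewrite big_split /= (bigID (fun J : {set T} => i \in J)) /=; congr (_ + _).
rewrite (reindex_onto (fun C => i |: C) (fun J => J :\ i)) => [|J iJ]; last first.
  exact: setD1K.
apply: eq_bigl => C; rewrite setU11 /=.
apply/eqP/idP => [<-|iC]; first by rewrite !inE eqxx.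
exact: setU1K.
Qed.

Definition shapley_poly (R : nzRingType) n (T : tensor R n) (x : 'I_n -> R)
    (i : 'I_n) : {poly R} :=
  \sum_(C : {set 'I_n} | i \notin C)
    (coal T x (i |: C) - coal T x C) *: 'X^(n - #|C|.+1).

Definition query_vec (R : nzRingType) n (x : 'I_n -> R) (i : 'I_n) (u : R) :
    'I_n -> 'I_2 -> R :=
  fun l k => if k == ord0 then x l else if l == i then 0 else 1 + u.

Lemma gmap_query_vec (R : comNzRingType) n (T : tensor R n) x i (u : R) :
  gmap T (query_vec x i u) = (shapley_poly T x i).[u].
Proof.
pose b l : R := if l == i then -1 else u.
rewrite (@gmap_ext _ _ _ _ (fun l k => 1 * tvec (x l) k + b l * tvec 0 k)); last first.
  by move=> l k; rewrite /query_vec /tvec /b; case: (k == ord0); case: (l == i); ring.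
rewrite gmap_expand (big_setU1_pairs i) horner_sum; apply: eq_bigr => C iC.
have prod_u : \prod_(l in ~: (i |: C)) b l = u ^+ (n - #|C|.+1).
  rewrite (eq_bigr (fun=> u)) ?prodr_const; last first.
    by move=> l; rewrite !inE negb_or /b => /andP[/negbTE -> _].
  congr (_ ^+ _); have := cardsC (i |: C); rewrite cardsU1 iC card_ord; lia.
have prod_Cc : \prod_(l in ~: C) b l = - u ^+ (n - #|C|.+1).
  have -> : ~: C = i |: ~: (i |: C).
    by apply/setP => l; rewrite !inE; case: eqP => // ->.
  by rewrite big_setU1 /= ?prod_u /b ?eqxx ?mulN1r // !inE eqxx.
rewrite prod_u prod_Cc !big1_eq hornerZ hornerXn /coal; ring.
Qed.

Section WeightedCoefSum.
Variable R : comNzRingType.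
Implicit Types (om : nat -> R) (p q : {poly R}).

Definition wcoef om p : R := \sum_(l < size p) om l * p`_l.

Lemma eq_wcoef om om' p : om =1 om' -> wcoef om p = wcoef om' p.
Proof. by move=> eq_om; apply: eq_bigr => l _; rewrite eq_om. Qed.

Lemma wcoefE om p N : (size p <= N)%N -> wcoef om p = \sum_(l < N) om l * p`_l.
Proof.
move=> leN; rewrite /wcoef (big_ord_widen _ (fun l => om l * p`_l) leN) big_mkcond.
by apply: eq_bigr => l _; case: ltnP => // /(nth_default 0) ->; rewrite mulr0.
Qed.

Lemma wcoefD om p q : wcoef om (p + q) = wcoef om p + wcoef om q.
Proof.
set N := maxn (size p) (size q).
rewrite !(@wcoefE _ _ N) ?leq_maxl ?leq_maxr ?(leq_trans (size_polyD _ _)) //.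
by rewrite -big_split; apply: eq_bigr => l _; rewrite coefD mulrDr.
Qed.

Lemma wcoefZ om a p : wcoef om (a *: p) = a * wcoef om p.
Proof.
rewrite (@wcoefE _ _ (size p)) ?size_scale_leq // /wcoef mulr_sumr.
by apply: eq_bigr => l _; rewrite coefZ mulrCA.
Qed.

Lemma wcoef_sum om (I : finType) (P : pred I) (F : I -> {poly R}) :
  wcoef om (\sum_(j | P j) F j) = \sum_(j | P j) wcoef om (F j).
Proof.
have wcoef0 : wcoef om 0 = 0 by rewrite /wcoef size_poly0 big_ord0.
exact: (big_morph (wcoef om) (wcoefD om) wcoef0).
Qed.

Lemma wcoefXn om d : wcoef om 'X^d = om d.
Proof.
rewrite (@wcoefE _ _ d.+1) ?size_polyXn // big_ord_recr /= coefXn eqxx mulr1.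
by rewrite big1 ?add0r // => l _; rewrite coefXn ltn_eqF ?mulr0.
Qed.

Lemma wcoefC om c : wcoef om c%:P = om 0%N * c.
Proof.
by rewrite (@wcoefE _ _ 1) ?size_polyC_leq1 // big_ord1 coefC.
Qed.

Lemma wcoefMX om p : wcoef om (p * 'X) = wcoef (fun l => om l.+1) p.
Proof.
have le_pX : (size (p * 'X)%R <= (size p).+1)%N.
  by rewrite (leq_trans (size_mul_leq _ _)) // size_polyX addn2.
rewrite (wcoefE _ le_pX) big_ord_recl coefMX mulr0 add0r.
by apply: eq_bigr => l _; rewrite coefMX.
Qed.

Lemma wcoef_newton_step om c a p :
  wcoef om (c%:P + p * ('X - a%:P)) =
  om 0%N * c + wcoef (fun l => om l.+1) p - a * wcoef om p.
Proof.
rewrite mulrBr wcoefD wcoefC -mulNr [_ * a%:P]mulrC mul_polyC.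
by rewrite wcoefD wcoefMX scalerN -scaleNr wcoefZ mulNr addrA.
Qed.

End WeightedCoefSum.

Lemma card_lt_notin (T : finType) (i : T) (C : {set T}) : i \notin C -> (#|C| < #|T|)%N.
Proof. by move=> iC; rewrite -cardsT proper_card // properT; apply: contraNneq iC => ->. Qed.

Lemma Phi_wcoef (R : comNzRingType) n (T : tensor R n) x w i :
  Phi T x w i = wcoef (fun m => w (n - m.+1)%N) (shapley_poly T x i).
Proof.
rewrite wcoef_sum; apply: eq_bigr => C iC; rewrite wcoefZ wcoefXn mulrC.
have := card_lt_notin iC; rewrite card_ord => ltCn.
by rewrite subnSK // subKn // ltnW.
Qed.

(** * Newton interpolation at the nodes 0, 1, 2, ... *)

(* [ddpoly p k] is the k-th divided-difference quotient of p, so that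
   [(ddpoly p k).[k]] is the k-th Newton coefficient of p. *)
Fixpoint ddpoly (R : fieldType) (p : {poly R}) (k : nat) : {poly R} :=
  if k is k'.+1 then
    let q := ddpoly p k' in (q - q.[k'%:R]%:P) %/ ('X - k'%:R%:P)
  else p.

Lemma ddpolyE (R : fieldType) (p : {poly R}) k :
  ddpoly p k = (ddpoly p k).[k%:R]%:P + ddpoly p k.+1 * ('X - k%:R%:P).
Proof.
rewrite /= divpK; first by rewrite addrC subrK.
by rewrite dvdp_XsubCl rootE !hornerE subrr.
Qed.

Lemma size_ddpoly (R : fieldType) (p : {poly R}) k : (size (ddpoly p k) <= size p - k)%N.
Proof.
elim: k => [|k IHk] /=; first by rewrite subn0.
set q := ddpoly p k in IHk *; set c := q.[k%:R].
rewrite size_divp -?size_poly_eq0 size_XsubC //= natn.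
move: IHk (size_polyC_leq1 c) (size_polyD q (- c%:P)); rewrite size_polyN.
set P := size p; set a := size q; set b := size c%:P; set d := size _; lia.
Qed.

Lemma horner_ddpolyS (R : fieldType) (p : {poly R}) k j : has_char0 R -> (k < j)%N ->
  (ddpoly p k.+1).[j%:R] = ((ddpoly p k).[j%:R] - (ddpoly p k).[k%:R]) / (j - k)%:R.
Proof.
move=> /pcharf0P charR0 ltkj.
have : (j - k)%:R != 0 :> R by rewrite charR0 subn_eq0 -ltnNge.
rewrite [X in (X.[j%:R] - _)](ddpolyE p k) !hornerE natrB ?(ltnW ltkj) // => nz.
by field.
Qed.

(** * Straight-line programs *)

Section Execution.
Variables (R : fieldType) (n : nat) (T : tensor R n).
Implicit Types (M : seq R) (P : seq (instr n)).

Definition reads_below (L : nat) (ins : instr n) : bool :=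
  match ins with
  | IConst _ => true
  | IAdd a b | ISub a b | IMul a b | IDiv a b => (a < L)%N && (b < L)%N
  | IQuery q => [forall l, forall k, (q l k < L)%N]
  end.

Lemma exec_instr_catr M M' ins :
  reads_below (size M) ins -> exec_instr T (M ++ M') ins = exec_instr T M ins.
Proof.
case: ins => [k|a b|a b|a b|a b|q] //=; try by case/andP=> aM bM; rewrite !nth_cat aM bM.
move=> /forallP qM; apply: gmap_ext => l k.
by move/forallP: (qM l) => /(_ k) qkM; rewrite nth_cat qkM.
Qed.

Lemma exec_cat M P1 P2 : exec_prog T M (P1 ++ P2) = exec_prog T (exec_prog T M P1) P2.
Proof. by elim: P1 M => //= ins P1 IH M; rewrite IH. Qed.

Lemma size_exec M P : size (exec_prog T M P) = (size M + size P)%N.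
Proof. by elim: P M => [|ins P IH] M /=; rewrite ?addn0 // IH size_rcons addSnnS. Qed.

Lemma nth_exec M P a : (a < size M)%N -> nth 0 (exec_prog T M P) a = nth 0 M a.
Proof.
elim: P M => //= ins P IH M aM.
by rewrite IH ?nth_rcons ?aM // size_rcons (ltn_trans aM).
Qed.

Lemma exec_parallel M P : all (reads_below (size M)) P ->
  exec_prog T M P = M ++ map (exec_instr T M) P.
Proof.
suff gen M' : all (reads_below (size M)) P ->
    exec_prog T (M ++ M') P = M ++ M' ++ map (exec_instr T M) P.
  by move=> /(gen [::]); rewrite cats0.
elim: P M' => [|ins P IH] M' /=; first by rewrite cats0.
case/andP=> insM PM.
by rewrite exec_instr_catr // rcons_cat IH // -cats1 -!catA.
Qed.

Lemma nth_exec_mkseq M L (f : nat -> instr n) r t :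
  size M = L -> (forall u, (u < r)%N -> reads_below L (f u)) -> (t < r)%N ->
  nth 0 (exec_prog T M (mkseq f r)) (L + t) = exec_instr T M (f t).
Proof.
move=> <- fM ltr; rewrite exec_parallel; last first.
  by rewrite all_map; apply/allP => u; rewrite mem_iota => /andP[_ ltu]; apply: fM.
rewrite nth_cat ltnNge leq_addr /= addKn -map_comp (nth_map 0%N) ?size_iota //.
by rewrite nth_iota.
Qed.

End Execution.

Section Programs.
Variable n : nat.
Open Scope nat_scope.

(* Memory layout: x at 0..n-1, w at n..2n-1, the constants 0..n from 2n on, then
   Q(0), ..., Q(n-1).  [wreg s] holds w(n-1-s), the weight of [u^s]Q. *)
Definition cst (j : nat) : nat := n.*2 + j.
Definition wreg (s : nat) : nat := n + (n - s.+1).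

Definition const_block : seq (instr n) := mkseq (IConst n) n.+1.

Definition query_regs (i : 'I_n) (j : nat) : 'I_n -> 'I_2 -> nat :=
  fun l k => if k == ord0 then l : nat else if l == i then cst 0 else cst j.+1.

Definition query_block (i : 'I_n) : seq (instr n) :=
  mkseq (fun j => IQuery (query_regs i j)) n.

Definition dd_row (m L b : nat) : seq (instr n) :=
  mkseq (fun t => ISub n (b + t.+1) b) m ++ mkseq (fun t => IDiv n (L + t) (cst t.+1)) m.

Definition horner_row (k c e L : nat) : seq (instr n) :=
  mkseq (fun s => IMul n (wreg s) c) k.+1 ++
  mkseq (fun s => IMul n (cst k) (e + s)) k.+1 ++
  mkseq (fun s => IAdd n (L + s) (e + s.+1)) k.+1 ++
  mkseq (fun s => ISub n (L + k.+1 * 2 + s) (L + k.+1 + s)) k.+1.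

(* The recursive call leaves its k+2 results in the registers just below [L']. *)
Fixpoint newton_prog (m k L b : nat) : seq (instr n) :=
  if m is m'.+1 then
    let P := newton_prog m' k.+1 (L + m.*2) (L + m) in
    let L' := L + m.*2 + size P in
    dd_row m L b ++ P ++ horner_row k b (L' - k.+2) L'
  else mkseq (fun s => IMul n (wreg s) b) k.+1.

Lemma newton_progS m k L b :
  newton_prog m.+1 k L b = dd_row m.+1 L b ++ newton_prog m k.+1 (L + m.+1.*2) (L + m.+1) ++
    horner_row k b (L + m.+1.*2 + size (newton_prog m k.+1 (L + m.+1.*2) (L + m.+1)) - k.+2)
      (L + m.+1.*2 + size (newton_prog m k.+1 (L + m.+1.*2) (L + m.+1))).
Proof. by []. Qed.

Definition shapley_prog (i : 'I_n) : seq (instr n) :=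
  const_block ++ query_block i ++ newton_prog n.-1 0 (n.*2 + n.+1 + n) (n.*2 + n.+1).

End Programs.

Section RowSpecs.
Variables (R : fieldType) (n : nat) (T : tensor R n).
Implicit Types (M : seq R).

Lemma dd_row_spec M m b : (m <= n)%N -> (n.*2 + n.+1 <= size M)%N -> (b + m < size M)%N ->
  let M' := exec_prog T M (dd_row n m (size M) b) in
  forall t, (t < m)%N ->
    M'`_(size M + m + t)%N = (M`_(b + t.+1)%N - M`_b) / M`_(cst n t.+1).
Proof.
move=> le_mn cstM bM M' t ltm; rewrite /M' exec_cat.
set M1 := exec_prog T M _.
have sz1 : size M1 = (size M + m)%N by rewrite size_exec size_mkseq.
rewrite (nth_exec_mkseq T sz1) // => [|u ltu]; last by rewrite /= /cst; lia.
rewrite /= (nth_exec_mkseq T erefl) // => [|u ltu]; last by rewrite /=; lia.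
by rewrite /= nth_exec // /cst; lia.
Qed.

Lemma horner_row_spec M k c e : (k < n)%N -> (n.*2 + n.+1 <= size M)%N ->
  (c < size M)%N -> (e + k.+1 < size M)%N ->
  let L := size M in let M' := exec_prog T M (horner_row n k c e L) in
  forall s, (s <= k)%N -> M'`_(L + k.+1 * 3 + s)%N =
    M`_(wreg n s) * M`_c + M`_(e + s.+1)%N - M`_(cst n k) * M`_(e + s)%N.
Proof.
move=> lt_kn cstM cM eM L M' s le_sk; rewrite /M' !exec_cat.
set M1 := exec_prog T M _; set M2 := exec_prog T M1 _; set M3 := exec_prog T M2 _.
have sz1 : size M1 = (L + k.+1)%N by rewrite size_exec size_mkseq.
have sz2 : size M2 = (L + k.+1 * 2)%N by rewrite size_exec sz1 size_mkseq; lia.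
have sz3 : size M3 = (L + k.+1 * 3)%N by rewrite size_exec sz2 size_mkseq; lia.
have vA : M1`_(L + s)%N = M`_(wreg n s) * M`_c.
  rewrite (nth_exec_mkseq T (erefl L)) // => u ltu /=.
  by rewrite /wreg; lia.
have vB : M2`_(L + k.+1 + s)%N = M`_(cst n k) * M`_(e + s)%N.
  rewrite (nth_exec_mkseq T sz1) // => [|u ltu]; last by rewrite /= /cst; lia.
  by rewrite /= !nth_exec // /cst; lia.
have vC : M3`_(L + k.+1 * 2 + s)%N = M1`_(L + s)%N + M`_(e + s.+1)%N.
  rewrite (nth_exec_mkseq T sz2) // => [|u ltu]; last by rewrite /=; lia.
  rewrite /= [M2`_(L + s)%N]nth_exec ?sz1; last by lia.
  by congr (_ + _); rewrite !nth_exec // ?sz1; lia.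
rewrite (nth_exec_mkseq T sz3) // => [|u ltu]; last by rewrite /=; lia.
by rewrite /= vC vA nth_exec ?vB // sz2; lia.
Qed.

End RowSpecs.

Section NewtonSpec.
Variables (R : fieldType) (n : nat) (T : tensor R n) (om : nat -> R) (Q : {poly R}).
Hypotheses (charR0 : has_char0 R) (size_Q : (size Q <= n)%N).
Implicit Types (M : seq R).

Definition const_weight_regs M : Prop :=
  [/\ (n.*2 + n.+1 <= size M)%N, forall j, (j <= n)%N -> M`_(cst n j) = j%:R
    & forall s, (s < n)%N -> M`_(wreg n s) = om s].

Lemma const_weight_regs_exec M P : const_weight_regs M -> const_weight_regs (exec_prog T M P).
Proof.
case=> sizeM cstM wM; split=> [|j le_jn|s lt_sn].
- by rewrite size_exec (leq_trans sizeM) ?leq_addr.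
- by rewrite nth_exec ?cstM // /cst; lia.
- by rewrite nth_exec ?wM // /wreg; lia.
Qed.

Lemma dd_row_ddpoly m k b M : (k + m < n)%N -> const_weight_regs M -> (b + m.+1 < size M)%N ->
  (forall t, (t <= m.+1)%N -> M`_(b + t)%N = (ddpoly Q k).[(k + t)%:R]) ->
  forall t, (t <= m)%N -> (exec_prog T M (dd_row n m.+1 (size M) b))`_(size M + m.+1 + t)%N =
    (ddpoly Q k.+1).[(k.+1 + t)%:R].
Proof.
move=> lt_kmn [sizeM cstM _] bM valM t le_tm; rewrite (dd_row_spec T) //; try lia.
rewrite (valM t.+1) ?cstM; try lia.
rewrite -(addn0 b) valM // addn0 (horner_ddpolyS _ charR0) ?addSn ?addnS; last by lia.
by rewrite (_ : ((k + t).+1 - k = t.+1)%N) //; lia.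
Qed.

Lemma horner_row_wcoef k c e M : (k < n)%N -> const_weight_regs M ->
  (c < size M)%N -> (e + k.+1 < size M)%N -> M`_c = (ddpoly Q k).[k%:R] ->
  (forall t, (t <= k.+1)%N -> M`_(e + t)%N = wcoef (fun l => om (l + t)) (ddpoly Q k.+1)) ->
  forall s, (s <= k)%N ->
    (exec_prog T M (horner_row n k c e (size M)))`_(size M + k.+1 * 3 + s)%N =
    wcoef (fun l => om (l + s)) (ddpoly Q k).
Proof.
move=> lt_kn [sizeM cstM wM] cM eM valc vale s le_sk.
rewrite (horner_row_spec T) // wM ?cstM ?vale ?valc; try lia.
rewrite [in RHS](ddpolyE Q k) wcoef_newton_step add0n mulrC.
by rewrite (@eq_wcoef _ (fun l => om (l.+1 + s)) (fun l => om (l + s.+1))) // => l; rewrite addSnnS.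
Qed.

Lemma newton_prog_spec m k b M : (k + m).+1 = n -> const_weight_regs M -> (b + m < size M)%N ->
  (forall t, (t <= m)%N -> M`_(b + t)%N = (ddpoly Q k).[(k + t)%:R]) ->
  let M' := exec_prog T M (newton_prog n m k (size M) b) in
  forall s, (s <= k)%N -> M'`_(size M' - k.+1 + s)%N = wcoef (fun l => om (l + s)) (ddpoly Q k).
Proof.
elim: m k b M => [|m IHm] k b M km envM bM valM M' s le_sk.
  have [sizeM _ wM] := envM.
  have /size1_polyC Qk_const : (size (ddpoly Q k) <= 1)%N.
    by rewrite (leq_trans (size_ddpoly Q k)) //; lia.
  rewrite size_exec size_mkseq addnK /M' (nth_exec_mkseq T erefl) // => [|u ltu]; last first.
    by rewrite /= /wreg; lia.
  rewrite /= wM; last by lia.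
  by rewrite -(addn0 b) valM // Qk_const hornerC wcoefC.
have [sizeM _ _] := envM.
set M1 := exec_prog T M (dd_row n m.+1 (size M) b).
have sz1 : size M1 = (size M + m.+1.*2)%N by rewrite size_exec size_cat !size_mkseq addnn.
set P := newton_prog n m k.+1 (size M + m.+1.*2) (size M + m.+1).
set M2 := exec_prog T M1 P.
have sz2 : size M2 = (size M + m.+1.*2 + size P)%N by rewrite size_exec sz1.
have eM' : M' = exec_prog T M2 (horner_row n k b (size M2 - k.+2) (size M2)).
  by rewrite /M' newton_progS -/P exec_cat -/M1 exec_cat -sz1 /M2 size_exec.
have szM' : size M' = (size M2 + k.+1 * 4)%N.
  by rewrite eM' size_exec !size_cat !size_mkseq; lia.
rewrite szM' (_ : (size M2 + k.+1 * 4 - k.+1 = size M2 + k.+1 * 3)%N); last by lia.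
have envM2 : const_weight_regs M2 by do 2 apply: const_weight_regs_exec.
rewrite eM' (horner_row_wcoef _ envM2) //.
- by lia.
- by rewrite sz2; lia.
- by rewrite sz2; lia.
- rewrite !nth_exec ?sz1; try lia.
  by rewrite -(addn0 b) valM // addn0.
have := IHm k.+1 (size M + m.+1)%N M1; rewrite sz1; apply=> //; try lia.
  exact: const_weight_regs_exec.
by move=> t le_tm; rewrite (dd_row_ddpoly (k := k) _ envM) //; lia.
Qed.

End NewtonSpec.

Lemma size_init_mem (R : Type) n (x : 'I_n -> R) (w : nat -> R) :
  size (init_mem x w) = n.*2.
Proof. by rewrite size_cat !size_map size_iota -enumT size_enum_ord addnn. Qed.

Lemma nth_init_mem_x (R : Type) (x0 : R) n (x : 'I_n -> R) w (l : 'I_n) :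
  nth x0 (init_mem x w) l = x l.
Proof.
rewrite nth_cat size_map size_enum_ord ltn_ord.
by rewrite (nth_map l) ?size_enum_ord // nth_ord_enum.
Qed.

Lemma nth_init_mem_w (R : Type) (x0 : R) n (x : 'I_n -> R) w s :
  (s < n)%N -> nth x0 (init_mem x w) (n + s) = w s.
Proof.
move=> lt_sn; rewrite nth_cat size_map size_enum_ord ltnNge leq_addr /= addKn.
by rewrite (nth_map 0%N) ?size_iota // nth_iota.
Qed.

Lemma size_shapley_poly (R : nzRingType) n (T : tensor R n) x (i : 'I_n) :
  (size (shapley_poly T x i) <= n)%N.
Proof.
apply/leq_sizeP => j le_nj; rewrite coef_sum big1 // => C _.
by rewrite coefZ coefXn gtn_eqF ?mulr0 //; have := ltn_ord i; lia.
Qed.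

Lemma prelude_spec (R : fieldType) n (i : 'I_n) (T : tensor R n) x w :
  let M := exec_prog T (init_mem x w) (const_block n ++ query_block i) in
  [/\ size M = (n.*2 + n.+1 + n)%N, const_weight_regs n (fun m => w (n - m.+1)%N) M
    & forall j, (j < n)%N -> M`_(n.*2 + n.+1 + j)%N = (shapley_poly T x i).[j%:R]].
Proof.
move=> M; set M1 := exec_prog T (init_mem x w) (const_block n).
have eM : M = exec_prog T M1 (query_block i) by rewrite /M exec_cat.
have sz1 : size M1 = (n.*2 + n.+1)%N by rewrite size_exec size_init_mem size_mkseq.
have cstM1 j : (j <= n)%N -> M1`_(cst n j) = j%:R.
  by move=> le_jn; rewrite (nth_exec_mkseq T (size_init_mem x w)).
have oldM1 a : (a < n.*2)%N -> M1`_a = (init_mem x w)`_a.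
  by move=> lt_a; rewrite nth_exec ?size_init_mem.
split.
- by rewrite eM size_exec sz1 size_mkseq.
- split=> [|j le_jn|s lt_sn].
  + by rewrite eM size_exec sz1 leq_addr.
  + by rewrite eM nth_exec ?sz1 ?cstM1 // /cst; lia.
  + rewrite eM nth_exec ?sz1 /wreg; last by lia.
    by rewrite oldM1 ?nth_init_mem_w //; lia.
move=> j lt_jn; rewrite eM (nth_exec_mkseq T sz1) // => [|u ltu]; last first.
  apply/forallP => l; apply/forallP => k; rewrite /query_regs /cst.
  by case: (k == ord0); [have := ltn_ord l | case: (l == i)]; lia.
rewrite -gmap_query_vec; apply: gmap_ext => l k; rewrite /query_regs /query_vec.
case: (k == ord0); first by rewrite oldM1 ?nth_init_mem_x //; have := ltn_ord l; lia.
by case: (l == i); rewrite cstM1 // -nat1r.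
Qed.

Lemma shapley_prog_correct (R : fieldType) n (i : 'I_n) (T : tensor R n) x w :
  has_char0 R -> run T x w (shapley_prog i) = Phi T x w i.
Proof.
move=> charR0; have n_gt0 : (0 < n)%N := leq_ltn_trans (leq0n i) (ltn_ord i).
have [sz envM valM] := prelude_spec i T x w.
rewrite /run /shapley_prog catA exec_cat -nth_last -sz.
set M := exec_prog T _ (const_block n ++ query_block i) in sz envM valM *.
have := @newton_prog_spec R n T _ _ charR0 (size_shapley_poly T x i) n.-1 0
  (n.*2 + n.+1) M _ envM _ _ 0 (leqnn 0).
rewrite subn1 addn0 Phi_wcoef => -> //.
- by apply: eq_wcoef => l; rewrite addn0.
- by rewrite add0n prednK.
- by rewrite sz; lia.
by move=> t le_t; apply: valM; lia.
Qed.

Section Cost.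
Variable n : nat.
Open Scope nat_scope.

Lemma count_query_mkseq (f : nat -> instr n) r :
  count (@is_query n) (mkseq f r) = count (fun t => is_query (f t)) (iota 0 r).
Proof. exact: count_map. Qed.

Lemma count_query_newton_prog m k L b : count (@is_query n) (newton_prog n m k L b) = 0.
Proof.
elim: m k L b => [|m IHm] k L b; first by rewrite count_query_mkseq count_pred0.
by rewrite newton_progS !count_cat IHm !count_query_mkseq !count_pred0.
Qed.

Lemma n_queries_shapley_prog (i : 'I_n) : n_queries (shapley_prog i) = n.
Proof.
rewrite /n_queries !count_cat count_query_newton_prog !count_query_mkseq count_pred0.
by rewrite count_predT size_iota addn0.
Qed.

Lemma size_newton_prog m k L b : size (newton_prog n m k L b) <= 6 * (k + m).+1 * m.+1.
Proof.
elim: m k L b => [|m IHm] k L b; first by rewrite size_mkseq; lia.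
rewrite newton_progS !size_cat !size_mkseq; have := IHm k.+1 (L + m.+1.*2) (L + m.+1); nia.
Qed.

Lemma n_arith_shapley_prog (i : 'I_n) : n_arith (shapley_prog i) <= 9 * n ^ 2.
Proof.
rewrite (leq_trans (count_size _ _)) // !size_cat !size_mkseq.
have := size_newton_prog n.-1 0 (n.*2 + n.+1 + n) (n.*2 + n.+1).
have := ltn_ord i; nia.
Qed.

End Cost.

Theorem theorem2 :
  exists c : nat, forall (n : nat), (0 < n)%N -> forall i : 'I_n,
    exists P : seq (instr n),
      (n_queries P <= c * n)%N /\ (n_arith P <= c * n ^ 2)%N /\
      forall (R : realFieldType) (T : tensor R n) (x : 'I_n -> R) (w : nat -> R),
        run T x w P = Phi T x w i.
Proof.
exists 9 => n _ i; exists (shapley_prog i); split; last split.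
- by rewrite n_queries_shapley_prog leq_pmull.
- exact: n_arith_shapley_prog.
- by move=> R T x w; apply: shapley_prog_correct; exact: pchar_num.
Qed.
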